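(* Let $p=2^m$ with $p\ge4$ and let $D$ be the $p\times p$ orthonormal discrete Haar wavelet basis matrix (defined in the context). Let $s\ge\log_2 p$, suppose Assumptions 1 and 2 hold with $0\le\delta_s<1$, and suppose $$T\le\frac{(a_u-a_\ell)^2\log p}{4(1+\delta_s)}.$$ Then $$\inf_{\hat f}\ \sup_{f^*\in\mathcal{F}_{T,s,D}}\mathbb{E}\big[\|\hat f-f^*\|_2^2\big]\ \ge\ \frac18,$$ where the infimum is over all measurable estimators $\hat f$ of $f^*$ based on $y$.
   Context: Setup: $n,p\ge1$ integers, $T>0$. For an orthonormal $D\in\mathbb{R}^{p\times p}$ with first column $d_1=p^{-1/2}(1,\dots,1)^\top$, let $\bar D$ be $D$ with its first column removed and $\mathcal{F}_{T,s,D}=\{f\in\mathbb{R}^p_{\ge0}:\ \|f\|_1=1,\ \|\bar D^\top f\|_0\le s\}$, $\|v\|_0$ being the number of nonzero entries. Given $A\in\mathbb{R}^{n\times p}$ and $f^*\in\mathcal{F}_{T,s,D}$, the observation is $y=(y_1,\dots,y_n)$ with independent $y_i\sim\mathrm{Poisson}(T(Af^* )_i)$; expectation is over $y$; $\log$ is the natural logarithm. Discrete Haar wavelet basis of $\mathbb{R}^{2^m}$: its columns are $2^{-m/2}(1,\dots,1)^\top$ (the first column) together with, for each level $\ell\in\{0,\dots,m-1\}$ and shift $k\in\{0,\dots,2^\ell-1\}$, the vector $\psi_{\ell,k}$ whose entries equal $2^{(\ell-m)/2}$ at indices $k2^{m-\ell}+1,\dots,k2^{m-\ell}+2^{m-\ell-1}$,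 equal $-2^{(\ell-m)/2}$ at indices $k2^{m-\ell}+2^{m-\ell-1}+1,\dots,(k+1)2^{m-\ell}$, and are $0$ elsewhere. Assumption 1: there are constants $a_\ell<a_u$ and $\widetilde A\in\mathbb{R}^{n\times p}$ with all entries in $[a_\ell/\sqrt n,a_u/\sqrt n]$ such that $A=\big(\widetilde A+\frac{a_u-2a_\ell}{\sqrt n}\mathbb{1}_{n\times p}\big)/\big(2(a_u-a_\ell)\sqrt n\big)$, with $\mathbb{1}_{n\times p}$ the all-ones matrix. Assumption 2: there is $\delta_s\ge0$ such that $\|\widetilde A D u\|_2^2\le(1+\delta_s)\|u\|_2^2$ for all $u\in\mathbb{R}^p$ with $\|u\|_0\le 2s$. *)

From Stdlib Require Import Reals Lra Lia Arith List.
Open Scope R_scope.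

Fixpoint fsum (n : nat) (f : nat -> R) : R :=
  match n with O => 0 | S k => fsum k f + f k end.

Fixpoint countnz (n : nat) (v : nat -> R) : nat :=
  match n with
  | O => O
  | S k => (countnz k v + (if Req_EM_T (v k) 0 then 0 else 1))%nat
  end.

(* Discrete Haar basis of R^(2^m), entry (i, j), 0-based.
   Column 0 is 2^(-m/2)(1,..,1); column j = 2^l + k (0 <= l < m, 0 <= k < 2^l)
   is psi_{l,k}. *)
Definition haar (m i j : nat) : R :=
  match j with
  | O => / sqrt (2 ^ m)
  | _ =>
    let l := Nat.log2 j in
    let k := (j - 2 ^ l)%nat in
    let w := (2 ^ (m - l))%nat in
    let h := (w / 2)%nat in
    let v := sqrt (2 ^ l / 2 ^ m) in
    if andb (Nat.leb (k * w) i) (Nat.ltb i (k * w + h)) then v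
    else if andb (Nat.leb (k * w + h) i) (Nat.ltb i ((k + 1) * w)) then - v
    else 0
  end.

(* bar D^T f, as a vector indexed 0 .. p-2 (column j+1 of D) *)
Definition DbarT (m : nat) (f : nat -> R) (j : nat) : R :=
  fsum (2 ^ m) (fun i => haar m i (S j) * f i).

Definition inF (m s : nat) (f : nat -> R) : Prop :=
  (forall j, (j < 2 ^ m)%nat -> 0 <= f j) /\
  fsum (2 ^ m) f = 1 /\
  (countnz (2 ^ m - 1) (DbarT m f) <= s)%nat.

Definition pois (lam : R) (k : nat) : R := exp (- lam) * lam ^ k / INR (fact k).

Definition lik (lam : nat -> R) (y : list nat) : R :=
  fold_right Rmult 1 (map (fun i => pois (lam i) (nth i y O)) (seq 0 (length y))).

Fixpoint boxsum (n N : nat) (F : list nat -> R) : R :=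
  match n with
  | O => F nil
  | S k => fsum (S N) (fun a => boxsum k N (fun l => F (a :: l)))
  end.

Definition mv (p : nat) (M : nat -> nat -> R) (u : nat -> R) (i : nat) : R :=
  fsum p (fun j => M i j * u j).

Definition sqnorm (n : nat) (v : nat -> R) : R := fsum n (fun i => v i ^ 2).

From Stdlib Require Import Reals Arith List Lra Lia.
Open Scope R_scope.

(* Test the p point-mass hypotheses f = e_j, which lie in F because row j of
   the Haar matrix has at most log2 p nonzero detail coefficients.  Let P_j be
   the law of y under e_j and Q its law under the uniform vector 1/p.  Since
   e_j - 1/p = D Dbar^T e_j, Assumption 2 controls A (e_j - 1/p), and the
   Poisson chi-square identity gives
     E_Q[(dP_j/dQ)^2] <= exp (sum_k (lam_k - mu_k)^2 / mu_k) <= p^(1/8) <= p/2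
   under the constraint on T.  No estimate is within squared distance 1/2 of
   two distinct e_j, so by AM-GM
     sum_j P_j(|fhat - e_j|^2 < 1/2) <= p/2 + (1/2p) sum_j E_Q[(dP_j/dQ)^2] <= 3p/4,
   and the average risk over j is at least (1 - 3/4) / 2 = 1/8.  Expectations
   over y in N^n are approximated by sums over boxes {0..N}^n, whose P_j-mass
   tends to 1. *)

(** * Finite sums and products *)

Lemma fsum_ext n f g : (forall i, (i < n)%nat -> f i = g i) -> fsum n f = fsum n g.
Proof.
  induction n as [|n IH]; cbn [fsum]; intros H; [reflexivity|].
  rewrite IH by (intros; apply H; lia). rewrite H by lia; reflexivity.
Qed.

Lemma fsum_le n f g : (forall i, (i < n)%nat -> f i <= g i) -> fsum n f <= fsum n g.
Proof.
  induction n as [|n IH]; cbn [fsum]; intros H; [lra|].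
  apply Rplus_le_compat; [apply IH; intros i Hi|]; apply H; lia.
Qed.

Lemma fsum_plus n f g : fsum n (fun i => f i + g i) = fsum n f + fsum n g.
Proof. induction n as [|n IH]; cbn [fsum]; [lra|]. rewrite IH; ring. Qed.

Lemma fsum_minus n f g : fsum n (fun i => f i - g i) = fsum n f - fsum n g.
Proof. induction n as [|n IH]; cbn [fsum]; [lra|]. rewrite IH; ring. Qed.

Lemma fsum_scal n c f : fsum n (fun i => c * f i) = c * fsum n f.
Proof. induction n as [|n IH]; cbn [fsum]; [lra|]. rewrite IH; ring. Qed.

Lemma fsum_const n c : fsum n (fun _ => c) = INR n * c.
Proof. induction n as [|n IH]; cbn [fsum]; [simpl; lra|]. rewrite IH, S_INR; ring. Qed.

Lemma fsum_nonneg n f : (forall i, (i < n)%nat -> 0 <= f i) -> 0 <= fsum n f.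
Proof. intros H. rewrite <- (Rmult_0_r (INR n)), <- fsum_const. now apply fsum_le. Qed.

Lemma fsum_shift n f : fsum (S n) f = f O + fsum n (fun i => f (S i)).
Proof. induction n as [|n IH]; cbn [fsum] in *; [lra|]. rewrite IH; ring. Qed.

Lemma fsum_split a b f : fsum (a + b) f = fsum a f + fsum b (fun i => f (a + i)%nat).
Proof.
  induction b as [|b IH]; cbn [fsum]; [rewrite Nat.add_0_r; ring|].
  rewrite Nat.add_succ_r; cbn [fsum]. rewrite IH; ring.
Qed.

Lemma fsum_single n f j : (j < n)%nat -> (forall i, (i < n)%nat -> i <> j -> f i = 0) ->
  fsum n f = f j.
Proof.
  induction n as [|n IH]; intros Hj H; [lia|]. cbn [fsum].
  destruct (Nat.eq_dec j n) as [->|Hne].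
  - rewrite (fsum_ext n f (fun _ => 0)), fsum_const by (intros; apply H; lia). ring.
  - rewrite IH by (lia || (intros; apply H; lia)). rewrite (H n) by lia. ring.
Qed.

Lemma fsum_sum_f_R0 N f : fsum (S N) f = sum_f_R0 f N.
Proof. induction N as [|N IH]; [simpl; ring|]. cbn [fsum sum_f_R0] in *. rewrite <- IH; ring. Qed.

Lemma fsum_exists_gt n f c : c * INR n < fsum n f -> exists i, (i < n)%nat /\ c < f i.
Proof.
  induction n as [|n IH]; cbn [fsum]; intros H; [simpl in H; lra|].
  rewrite S_INR in H. destruct (Rlt_le_dec c (f n)) as [Hc|Hc].
  - exists n; split; [lia|exact Hc].
  - destruct IH as [i [Hi Hci]]; [lra|]. exists i; split; [lia|exact Hci].
Qed.

Lemma fsum_ge_term n g a : (a < n)%nat -> (forall i, (i < n)%nat -> 0 <= g i) -> g a <= fsum n g.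
Proof.
  intros Ha H. induction n as [|n IH]; [lia|]. cbn [fsum].
  assert (0 <= g n) by (apply H; lia).
  destruct (Nat.eq_dec a n) as [->|Hne].
  - assert (0 <= fsum n g) by (apply fsum_nonneg; intros; apply H; lia). lra.
  - assert (g a <= fsum n g) by (apply IH; [lia|intros; apply H; lia]). lra.
Qed.

Lemma fsum_ge_two_terms n g a b : (a < n)%nat -> (b < n)%nat -> a <> b ->
  (forall i, (i < n)%nat -> 0 <= g i) -> g a + g b <= fsum n g.
Proof.
  intros Ha Hb Hab H. induction n as [|n IH]; [lia|]. cbn [fsum].
  assert (Hg : forall i, (i < n)%nat -> 0 <= g i) by (intros; apply H; lia).
  destruct (Nat.eq_dec a n) as [->|Ha']; [|destruct (Nat.eq_dec b n) as [->|Hb']].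
  - pose proof (fsum_ge_term n g b ltac:(lia) Hg). lra.
  - pose proof (fsum_ge_term n g a ltac:(lia) Hg). lra.
  - assert (0 <= g n) by (apply H; lia). pose proof (IH ltac:(lia) ltac:(lia) Hg). lra.
Qed.

Lemma fsum_indicator_le1 n h : (forall j, (j < n)%nat -> h j = 0 \/ h j = 1) ->
  (forall a b, (a < n)%nat -> (b < n)%nat -> a <> b -> h a = 1 -> h b = 1 -> False) ->
  fsum n h <= 1.
Proof.
  induction n as [|n IH]; intros H01 Huniq; cbn [fsum]; [lra|].
  destruct (H01 n ltac:(lia)) as [E|E]; rewrite E.
  - assert (fsum n h <= 1); [|lra].
    apply IH; [intros; apply H01; lia | intros a b Ha Hb; apply Huniq; lia].
  - rewrite (fsum_ext _ _ (fun _ => 0)), fsum_const; [lra|].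
    intros i Hi. destruct (H01 i ltac:(lia)) as [|Ei]; [assumption|].
    exfalso; apply (Huniq i n); auto; lia.
Qed.

Fixpoint fprod (n : nat) (g : nat -> R) : R :=
  match n with O => 1 | S k => g O * fprod k (fun i => g (S i)) end.

Lemma fprod_nonneg n g : (forall k, (k < n)%nat -> 0 <= g k) -> 0 <= fprod n g.
Proof.
  revert g; induction n as [|n IH]; intros g H; cbn [fprod]; [lra|].
  apply Rmult_le_pos; [apply H; lia | apply IH; intros; apply H; lia].
Qed.

Lemma fprod_le n g h : (forall k, (k < n)%nat -> 0 <= g k <= h k) -> fprod n g <= fprod n h.
Proof.
  revert g h; induction n as [|n IH]; intros g h H; cbn [fprod]; [lra|].
  apply Rmult_le_compat.
  - apply H; lia.
  - apply fprod_nonneg; intros; apply H; lia.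
  - apply H; lia.
  - apply IH; intros; apply H; lia.
Qed.

Lemma fprod_exp n c : fprod n (fun k => exp (c k)) = exp (fsum n c).
Proof.
  revert c; induction n as [|n IH]; intros c; [simpl; now rewrite exp_0|].
  cbn [fprod]. rewrite IH, fsum_shift, exp_plus; reflexivity.
Qed.

Lemma fprod_le1 n g : (forall k, (k < n)%nat -> 0 <= g k <= 1) -> fprod n g <= 1.
Proof.
  intros H. replace 1 with (fprod n (fun _ => 1)) by (clear; induction n; cbn [fprod]; lra).
  now apply fprod_le.
Qed.

Lemma fprod_ge_1_sub n g e : 0 <= e <= 1 -> (forall k, (k < n)%nat -> 1 - e <= g k <= 1) ->
  1 - INR n * e <= fprod n g.
Proof.
  revert g; induction n as [|n IH]; intros g He H; cbn [fprod]; [simpl; lra|].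
  set (X := fprod n (fun i => g (S i))).
  assert (Hlow : 1 - INR n * e <= X) by (apply IH; [|intros; apply H]; lia || lra).
  assert (Hup : X <= 1) by (apply fprod_le1; intros k Hk; specialize (H (S k) ltac:(lia)); lra).
  assert (HX : 0 <= X) by (apply fprod_nonneg; intros k Hk; specialize (H (S k) ltac:(lia)); lra).
  specialize (H O ltac:(lia)). rewrite S_INR. nra.
Qed.

(** * Sums over boxes and Poisson likelihoods *)

Lemma boxsum_ext n N F G : (forall y, length y = n -> F y = G y) -> boxsum n N F = boxsum n N G.
Proof.
  revert F G; induction n as [|n IH]; cbn [boxsum]; intros F G H; [now apply H|].
  apply fsum_ext; intros; apply IH; intros; apply H; simpl; auto.
Qed.

Lemma boxsum_le n N F G : (forall y, length y = n -> F y <= G y) -> boxsum n N F <= boxsum n N G.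
Proof.
  revert F G; induction n as [|n IH]; cbn [boxsum]; intros F G H; [now apply H|].
  apply fsum_le; intros; apply IH; intros; apply H; simpl; auto.
Qed.

Lemma boxsum_plus n N F G : boxsum n N (fun y => F y + G y) = boxsum n N F + boxsum n N G.
Proof.
  revert F G; induction n as [|n IH]; cbn [boxsum]; intros F G; [reflexivity|].
  rewrite <- fsum_plus. apply fsum_ext; intros; apply IH.
Qed.

Lemma boxsum_scal n N c F : boxsum n N (fun y => c * F y) = c * boxsum n N F.
Proof.
  revert F; induction n as [|n IH]; cbn [boxsum]; intros F; [reflexivity|].
  rewrite <- fsum_scal. apply fsum_ext; intros; apply IH.
Qed.

Lemma boxsum_fsum n N M G :
  boxsum n N (fun y => fsum M (fun j => G j y)) = fsum M (fun j => boxsum n N (G j)).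
Proof.
  induction M as [|M IH]; cbn [fsum].
  - rewrite <- (Rmult_0_l 0), boxsum_scal; ring.
  - rewrite boxsum_plus, IH; reflexivity.
Qed.

Definition prodl (F : nat -> nat -> R) (y : list nat) : R :=
  fold_right Rmult 1 (map (fun i => F i (nth i y O)) (seq 0 (length y))).

Lemma prodl_cons F a y : prodl F (a :: y) = F O a * prodl (fun i => F (S i)) y.
Proof.
  unfold prodl. cbn [length seq map fold_right nth].
  rewrite <- seq_shift, map_map. reflexivity.
Qed.

Lemma prodl_mul F G y : prodl (fun i a => F i a * G i a) y = prodl F y * prodl G y.
Proof.
  revert F G; induction y as [|a y IH]; intros F G; [unfold prodl; simpl; lra|].
  rewrite !prodl_cons, (IH (fun i => F (S i)) (fun i => G (S i))); ring.
Qed.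

Lemma prodl_inv F y : prodl (fun i a => / F i a) y = / prodl F y.
Proof.
  revert F; induction y as [|a y IH]; intros F; [unfold prodl; simpl; lra|].
  rewrite !prodl_cons, (IH (fun i => F (S i))), Rinv_mult; reflexivity.
Qed.

Lemma prodl_pos F y : (forall i a, (i < length y)%nat -> 0 < F i a) -> 0 < prodl F y.
Proof.
  revert F; induction y as [|b y IH]; intros F H; [unfold prodl; simpl; lra|].
  rewrite prodl_cons. apply Rmult_lt_0_compat; [apply H|apply IH; intros; apply H]; simpl; lia.
Qed.

Lemma prodl_nonneg F y : (forall i a, (i < length y)%nat -> 0 <= F i a) -> 0 <= prodl F y.
Proof.
  revert F; induction y as [|b y IH]; intros F H; [unfold prodl; simpl; lra|].
  rewrite prodl_cons. apply Rmult_le_pos; [apply H|apply IH; intros; apply H]; simpl; lia.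
Qed.

Lemma boxsum_prodl n N F : boxsum n N (prodl F) = fprod n (fun k => fsum (S N) (F k)).
Proof.
  revert F; induction n as [|n IH]; intros F; [reflexivity|]. cbn [boxsum fprod].
  rewrite <- IH, Rmult_comm, <- fsum_scal. apply fsum_ext; intros a _.
  rewrite Rmult_comm, <- boxsum_scal. apply boxsum_ext; intros; apply prodl_cons.
Qed.

Lemma fact_INR_pos k : 0 < INR (fact k).
Proof. apply lt_0_INR, lt_O_fact. Qed.

Lemma pois_nonneg l a : 0 <= l -> 0 <= pois l a.
Proof.
  intros Hl. unfold pois. pose proof (fact_INR_pos a). pose proof (exp_pos (- l)).
  apply Rmult_le_pos; [apply Rmult_le_pos; [lra|apply pow_le; lra]|left; apply Rinv_0_lt_compat; lra].
Qed.

Lemma pois_pos l a : 0 < l -> 0 < pois l a.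
Proof.
  intros Hl. unfold pois. pose proof (fact_INR_pos a).
  apply Rdiv_lt_0_compat; [apply Rmult_lt_0_compat; [apply exp_pos|apply pow_lt]|]; lra.
Qed.

Lemma pois_mass_E1 l N : fsum (S N) (pois l) = exp (- l) * E1 l N.
Proof.
  rewrite fsum_sum_f_R0. unfold E1. rewrite scal_sum. apply sum_eq; intros.
  unfold pois; lra.
Qed.

Lemma E1_le_exp x N : 0 <= x -> E1 x N <= exp x.
Proof.
  intros Hx. apply growing_ineq; [|apply E1_cvg]. intros k.
  change (E1 x (S k)) with (E1 x k + / INR (fact (S k)) * x ^ S k).
  assert (0 <= / INR (fact (S k)) * x ^ S k); [|lra].
  apply Rmult_le_pos; [left; apply Rinv_0_lt_compat, fact_INR_pos|apply pow_le; lra].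
Qed.

Lemma pois_mass_le1 l N : 0 <= l -> fsum (S N) (pois l) <= 1.
Proof.
  intros Hl. rewrite pois_mass_E1, <- (exp_0), <- (Rplus_opp_l l), exp_plus.
  apply Rmult_le_compat_l; [left; apply exp_pos|now apply E1_le_exp].
Qed.

Lemma pois_mass_eventually l e : 0 < e ->
  exists N0, forall N, (N0 <= N)%nat -> 1 - e <= fsum (S N) (pois l).
Proof.
  intros He. destruct (E1_cvg l (e * exp l)) as [N0 HN0].
  { apply Rmult_lt_0_compat; [exact He|apply exp_pos]. }
  exists N0. intros N HN. specialize (HN0 N ltac:(lia)). unfold Rdist in HN0.
  apply Rabs_def2 in HN0. rewrite pois_mass_E1.
  assert (Hinv : exp (- l) * exp l = 1) by (rewrite <- exp_plus, Rplus_opp_l; apply exp_0).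
  pose proof (exp_pos (- l)). nra.
Qed.

Lemma eventually_forall_lt K (P : nat -> nat -> Prop) :
  (forall k, (k < K)%nat -> exists N0, forall N, (N0 <= N)%nat -> P k N) ->
  exists N0, forall N, (N0 <= N)%nat -> forall k, (k < K)%nat -> P k N.
Proof.
  induction K as [|K IH]; intros H; [exists O; intros; lia|].
  destruct IH as [N1 H1]; [intros; apply H; lia|].
  destruct (H K ltac:(lia)) as [N2 H2]. exists (Nat.max N1 N2). intros N HN k Hk.
  destruct (Nat.eq_dec k K) as [->|]; [apply H2|apply H1]; lia.
Qed.

(* Summed over all of N the left-hand side is exactly exp ((l - mu) ^ 2 / mu). *)
Lemma pois_chi2_factor_le l mu N : 0 <= l -> 0 < mu ->
  fsum (S N) (fun a => pois l a ^ 2 / pois mu a) <= exp ((l - mu) ^ 2 / mu).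
Proof.
  intros Hl Hmu.
  rewrite (fsum_ext _ _ (fun a => exp (- (2 * l) + mu) * (/ INR (fact a) * (l * l / mu) ^ a))).
  - rewrite fsum_scal, fsum_sum_f_R0. fold (E1 (l * l / mu) N).
    replace ((l - mu) ^ 2 / mu) with ((- (2 * l) + mu) + l * l / mu) by (field; lra).
    rewrite (exp_plus _ (l * l / mu)). apply Rmult_le_compat_l; [left; apply exp_pos|].
    apply E1_le_exp. apply Rmult_le_pos; [nra|left; apply Rinv_0_lt_compat; lra].
  - intros a _. unfold pois, Rdiv. rewrite !Rpow_mult_distr, !pow_inv, exp_plus, !exp_Ropp.
    replace (2 * l) with (l + l) by ring. rewrite exp_plus.
    pose proof (exp_pos l). pose proof (exp_pos mu). pose proof (fact_INR_pos a).
    assert (0 < mu ^ a) by (apply pow_lt; lra).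
    field. repeat split; lra.
Qed.

Lemma lik_pos lam y : (forall k, (k < length y)%nat -> 0 < lam k) -> 0 < lik lam y.
Proof. intros H. apply (prodl_pos (fun i => pois (lam i))). intros; now apply pois_pos, H. Qed.

Lemma lik_nonneg lam y : (forall k, (k < length y)%nat -> 0 <= lam k) -> 0 <= lik lam y.
Proof. intros H. apply (prodl_nonneg (fun i => pois (lam i))). intros; now apply pois_nonneg, H. Qed.

Lemma lik_mass_le1 n N lam : (forall k, (k < n)%nat -> 0 <= lam k) -> boxsum n N (lik lam) <= 1.
Proof.
  intros H. change (boxsum n N (prodl (fun i => pois (lam i))) <= 1). rewrite boxsum_prodl.
  apply fprod_le1; intros k Hk. split.
  - apply fsum_nonneg; intros; now apply pois_nonneg, H.
  - now apply pois_mass_le1, H.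
Qed.

Lemma lik_mass_ge_1_sub n N lam e : 0 <= e <= 1 ->
  (forall k, (k < n)%nat -> 0 <= lam k /\ 1 - e <= fsum (S N) (pois (lam k))) ->
  1 - INR n * e <= boxsum n N (lik lam).
Proof.
  intros He H. change (1 - INR n * e <= boxsum n N (prodl (fun i => pois (lam i)))).
  rewrite boxsum_prodl. apply fprod_ge_1_sub; [exact He|].
  intros k Hk. destruct (H k Hk). split; [assumption|now apply pois_mass_le1].
Qed.

Lemma lik_chi2_le n N lam mu : (forall k, (k < n)%nat -> 0 <= lam k /\ 0 < mu k) ->
  boxsum n N (fun y => lik lam y ^ 2 / lik mu y)
  <= exp (fsum n (fun k => (lam k - mu k) ^ 2 / mu k)).
Proof.
  intros H.
  rewrite (boxsum_ext _ _ _ (prodl (fun i a => pois (lam i) a ^ 2 / pois (mu i) a))).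
  - rewrite boxsum_prodl, <- fprod_exp. apply fprod_le. intros k Hk.
    destruct (H k Hk) as [Hl Hm]. split; [|now apply pois_chi2_factor_le].
    apply fsum_nonneg; intros a _. pose proof (pois_pos _ a Hm).
    apply Rmult_le_pos; [apply pow2_ge_0|left; now apply Rinv_0_lt_compat].
  - intros y _. unfold Rdiv. rewrite prodl_mul, prodl_inv.
    change (lik lam y ^ 2 * / prodl (fun i => pois (mu i)) y
      = prodl (fun i a => pois (lam i) a ^ 2) y * / prodl (fun i => pois (mu i)) y).
    f_equal. unfold lik, prodl. rewrite <- map_map with (g := fun x => x ^ 2).
    induction (map _ _) as [|x l IH]; cbn [map fold_right]; [ring|]. rewrite <- IH; ring.
Qed.

(** * Testing many hypotheses *)

Section MultipleTesting.

Variables (n N p : nat) (P : nat -> list nat -> R) (Q : list nat -> R) (d : nat -> list nat -> R).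
Hypotheses
  (p_pos : (0 < p)%nat)
  (Q_pos : forall y, length y = n -> 0 < Q y)
  (Q_mass : boxsum n N Q <= 1)
  (P_nonneg : forall j y, (j < p)%nat -> length y = n -> 0 <= P j y)
  (P_chi2 : forall j, (j < p)%nat -> boxsum n N (fun y => P j y ^ 2 / Q y) <= INR p / 2)
  (d_nonneg : forall j y, 0 <= d j y)
  (d_sep : forall a b y, (a < p)%nat -> (b < p)%nat -> a <> b -> 1 <= d a y + d b y).

Let close j y := if Rlt_dec (d j y) (1/2) then 1 else 0.

Lemma close_01 j y : close j y = 0 \/ close j y = 1.
Proof. unfold close. destruct (Rlt_dec _ _); auto. Qed.

Lemma loss_ge_close j y : (1 - close j y) / 2 <= d j y.
Proof. unfold close. pose proof (d_nonneg j y). destruct (Rlt_dec _ _); lra. Qed.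

Lemma fsum_close_le1 y : fsum p (fun j => close j y) <= 1.
Proof.
  apply fsum_indicator_le1; [intros; apply close_01|].
  intros a b Ha Hb Hab. pose proof (d_sep a b y Ha Hb Hab). unfold close.
  destruct (Rlt_dec (d a y) _), (Rlt_dec (d b y) _); lra.
Qed.

(* Pointwise AM-GM: P h <= (p Q h + P^2 / (p Q)) / 2 for h in {0, 1}. *)
Lemma fsum_close_weight_le y : length y = n ->
  fsum p (fun j => P j y * close j y)
  <= (INR p * Q y + / INR p * fsum p (fun j => P j y ^ 2 / Q y)) / 2.
Proof.
  intros Hy. pose proof (Q_pos y Hy) as HQ.
  assert (Hp : 0 < INR p) by (apply lt_0_INR; lia).
  assert (HpQ : 0 < INR p * Q y) by nra.
  apply Rle_trans with
    (fsum p (fun j => (INR p * Q y * close j y + P j y ^ 2 / (INR p * Q y)) / 2)).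
  - apply fsum_le; intros j _.
    assert (0 <= P j y ^ 2 / (INR p * Q y))
      by (apply Rmult_le_pos; [apply pow2_ge_0|left; now apply Rinv_0_lt_compat]).
    destruct (close_01 j y) as [E|E]; rewrite E; [lra|].
    assert (Hsq : 0 <= (INR p * Q y - P j y) ^ 2 / (INR p * Q y))
      by (apply Rmult_le_pos; [apply pow2_ge_0|left; now apply Rinv_0_lt_compat]).
    replace ((INR p * Q y * 1 + P j y ^ 2 / (INR p * Q y)) / 2)
      with (P j y * 1 + (INR p * Q y - P j y) ^ 2 / (INR p * Q y) / 2) by (field; lra).
    lra.
  - rewrite (fsum_ext _ _ (fun j => / 2 * (INR p * Q y) * close j y
                                    + / 2 * / INR p * (P j y ^ 2 / Q y)))
      by (intros; field; lra).
    rewrite fsum_plus, !fsum_scal. pose proof (fsum_close_le1 y). nra.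
Qed.

Lemma sum_close_mass_le : fsum p (fun j => boxsum n N (fun y => P j y * close j y)) <= 3 / 4 * INR p.
Proof.
  assert (Hp : 0 < INR p) by (apply lt_0_INR; lia).
  rewrite <- boxsum_fsum.
  apply Rle_trans with (boxsum n N (fun y => / 2 * (INR p * Q y)
                                      + / 2 * / INR p * fsum p (fun j => P j y ^ 2 / Q y))).
  { apply boxsum_le; intros y Hy. pose proof (fsum_close_weight_le y Hy). lra. }
  rewrite boxsum_plus, !boxsum_scal, boxsum_fsum.
  assert (Hchi : fsum p (fun j => boxsum n N (fun y => P j y ^ 2 / Q y)) <= INR p * (INR p / 2)).
  { rewrite <- fsum_const. apply fsum_le; exact P_chi2. }
  assert (/ INR p * fsum p (fun j => boxsum n N (fun y => P j y ^ 2 / Q y)) <= INR p / 2).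
  { apply Rmult_le_reg_l with (INR p); [exact Hp|].
    rewrite <- Rmult_assoc, Rinv_r, Rmult_1_l by lra. exact Hchi. }
  assert (INR p * boxsum n N Q <= INR p)
    by (rewrite <- (Rmult_1_r (INR p)) at 2; now apply Rmult_le_compat_l; [lra|]).
  lra.
Qed.

Theorem multiple_testing_risk_ge :
  1 / 2 * fsum p (fun j => boxsum n N (P j)) - 3 / 8 * INR p
  <= fsum p (fun j => boxsum n N (fun y => P j y * d j y)).
Proof.
  apply Rle_trans with (fsum p (fun j => boxsum n N (fun y => / 2 * P j y + - / 2 * (P j y * close j y)))).
  - replace (fsum p (fun j => boxsum n N (fun y => / 2 * P j y + - / 2 * (P j y * close j y))))
      with (/ 2 * fsum p (fun j => boxsum n N (P j))
            + - / 2 * fsum p (fun j => boxsum n N (fun y => P j y * close j y))).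
    + pose proof sum_close_mass_le. lra.
    + rewrite <- !fsum_scal, <- fsum_plus. apply fsum_ext; intros.
      now rewrite boxsum_plus, !boxsum_scal.
  - apply fsum_le; intros j Hj. apply boxsum_le; intros y Hy.
    pose proof (P_nonneg j y Hj Hy). pose proof (loss_ge_close j y).
    assert (P j y * ((1 - close j y) / 2) <= P j y * d j y) by (apply Rmult_le_compat_l; lra).
    lra.
Qed.

End MultipleTesting.

Definition dirac (j i : nat) : R := if Nat.eqb i j then 1 else 0.

Lemma fsum_mul_dirac n f j : (j < n)%nat -> fsum n (fun i => f i * dirac j i) = f j.
Proof.
  intros Hj. rewrite (fsum_single _ _ j Hj); unfold dirac.
  - rewrite Nat.eqb_refl; ring.
  - intros i _ Hij. apply Nat.eqb_neq in Hij. rewrite Hij; ring.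
Qed.

Lemma fsum_dirac n j : (j < n)%nat -> fsum n (dirac j) = 1.
Proof.
  intros Hj. rewrite <- (fsum_mul_dirac n (fun _ => 1) j Hj). apply fsum_ext; intros; ring.
Qed.

Lemma mv_dirac p M j k : (j < p)%nat -> mv p M (dirac j) k = M k j.
Proof. apply fsum_mul_dirac. Qed.

Lemma mv_sub p M f g k : mv p M f k - mv p M g k = mv p M (fun i => f i - g i) k.
Proof. unfold mv. rewrite <- fsum_minus. apply fsum_ext; intros; ring. Qed.

Lemma mv_affine p M Mt b D f k : (forall i, (i < p)%nat -> M k i = (Mt k i + b) / D) ->
  mv p M f k = / D * mv p Mt f k + b / D * fsum p f.
Proof.
  intros HM. unfold mv. rewrite <- !fsum_scal, <- fsum_plus.
  apply fsum_ext; intros i Hi. rewrite HM by exact Hi. unfold Rdiv; ring.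
Qed.

Lemma sqnorm_nonneg p v : 0 <= sqnorm p v.
Proof. apply fsum_nonneg; intros; apply pow2_ge_0. Qed.

(* Coordinates a and b alone contribute (x - 1)^2 + x^2 >= 1/2 each. *)
Lemma sqnorm_sub_dirac_sep p x a b : (a < p)%nat -> (b < p)%nat -> a <> b ->
  1 <= sqnorm p (fun i => x i - dirac a i) + sqnorm p (fun i => x i - dirac b i).
Proof.
  intros Ha Hb Hab. unfold sqnorm. rewrite <- fsum_plus.
  set (g := fun i => (x i - dirac a i) ^ 2 + (x i - dirac b i) ^ 2).
  assert (Hg : forall i, (i < p)%nat -> 0 <= g i)
    by (intros; unfold g; pose proof (pow2_ge_0 (x i - dirac a i)); pose proof (pow2_ge_0 (x i - dirac b i)); lra).
  pose proof (fsum_ge_two_terms p g a b Ha Hb Hab Hg) as H.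
  unfold g at 1 2, dirac in H.
  rewrite !Nat.eqb_refl, (proj2 (Nat.eqb_neq a b) Hab), (proj2 (Nat.eqb_neq b a) (not_eq_sym Hab)) in H.
  pose proof (pow2_ge_0 (x a - 1 / 2)). pose proof (pow2_ge_0 (x b - 1 / 2)). nra.
Qed.

(** * The Haar basis *)

Lemma pow2_pos n : (0 < 2 ^ n)%nat.
Proof. apply Nat.neq_0_lt_0, Nat.pow_nonzero; lia. Qed.

Lemma pow2_pred_succ n : (2 ^ n = S (2 ^ n - 1))%nat.
Proof. pose proof (pow2_pos n); lia. Qed.

Lemma pow2_sub_succ m l : (l < m)%nat -> (2 ^ (m - l) = 2 ^ (m - l - 1) * 2)%nat.
Proof. intros Hl. replace (m - l)%nat with (S (m - l - 1)) at 1 by lia. now rewrite Nat.pow_succ_r', Nat.mul_comm. Qed.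

Lemma haar_level m l k i : (l < m)%nat -> (k < 2 ^ l)%nat ->
  haar m i (2 ^ l + k)%nat =
  if Nat.eqb (i / 2 ^ (m - l - 1)) (2 * k) then sqrt (2 ^ l / 2 ^ m)
  else if Nat.eqb (i / 2 ^ (m - l - 1)) (2 * k + 1) then - sqrt (2 ^ l / 2 ^ m) else 0.
Proof.
  intros Hl Hk.
  assert (Hj : (2 ^ l + k = S (2 ^ l + k - 1))%nat) by (pose proof (pow2_pos l); lia).
  unfold haar. rewrite Hj, <- Hj.
  assert (Hlog : Nat.log2 (2 ^ l + k) = l)
    by (apply Nat.log2_unique; [lia|split; [lia|rewrite Nat.pow_succ_r'; lia]]).
  rewrite Hlog, pow2_sub_succ by exact Hl. replace (2 ^ l + k - 2 ^ l)%nat with k by lia.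
  set (H := (2 ^ (m - l - 1))%nat). assert (HH : (0 < H)%nat) by apply pow2_pos.
  replace (H * 2 / 2)%nat with H by (now rewrite Nat.div_mul).
  set (q := (i / H)%nat).
  assert (Hq : (H * q <= i < H * q + H)%nat).
  { unfold q. pose proof (Nat.div_mod i H ltac:(lia)). pose proof (Nat.mod_upper_bound i H ltac:(lia)). lia. }
  clearbody q H.
  destruct (Nat.eqb_spec q (2 * k)) as [E|E]; [|destruct (Nat.eqb_spec q (2 * k + 1)) as [E2|E2]].
  - subst q. destruct (Nat.leb_spec0 (k * (H * 2)) i); [|nia].
    destruct (Nat.ltb_spec0 i (k * (H * 2) + H)); [reflexivity|nia].
  - subst q. destruct (Nat.leb_spec0 (k * (H * 2)) i); [|nia].
    destruct (Nat.ltb_spec0 i (k * (H * 2) + H)); [nia|]. cbn [andb].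
    destruct (Nat.leb_spec0 (k * (H * 2) + H) i); [|nia].
    destruct (Nat.ltb_spec0 i ((k + 1) * (H * 2))); [reflexivity|nia].
  - assert (q < 2 * k \/ 2 * k + 1 < q)%nat as [Hc|Hc] by lia.
    + destruct (Nat.leb_spec0 (k * (H * 2)) i); [nia|]. cbn [andb].
      destruct (Nat.leb_spec0 (k * (H * 2) + H) i); [nia|reflexivity].
    + destruct (Nat.leb_spec0 (k * (H * 2)) i); cbn [andb];
      destruct (Nat.ltb_spec0 i (k * (H * 2) + H)); cbn [andb]; try nia;
      destruct (Nat.leb_spec0 (k * (H * 2) + H) i); cbn [andb];
      destruct (Nat.ltb_spec0 i ((k + 1) * (H * 2))); cbn [andb]; try nia; reflexivity.
Qed.

Lemma haar_level_sum m l i j : (l < m)%nat -> (i < 2 ^ m)%nat ->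
  fsum (2 ^ l) (fun k => haar m i (2 ^ l + k)%nat * haar m j (2 ^ l + k)%nat) =
  if Nat.eqb (i / 2 ^ (m - l)) (j / 2 ^ (m - l))
  then (if Nat.eqb (i / 2 ^ (m - l - 1)) (j / 2 ^ (m - l - 1)) then 2 ^ l / 2 ^ m
        else - (2 ^ l / 2 ^ m))
  else 0.
Proof.
  intros Hl Hi.
  assert (Hm : (2 ^ m = 2 ^ (m - l - 1) * 2 * 2 ^ l)%nat).
  { rewrite <- pow2_sub_succ, <- Nat.pow_add_r by exact Hl. f_equal; lia. }
  set (H := (2 ^ (m - l - 1))%nat) in *. assert (HH : (0 < H)%nat) by apply pow2_pos.
  assert (Hv : 0 <= 2 ^ l / 2 ^ m)
    by (apply Rmult_le_pos; [|left; apply Rinv_0_lt_compat]; apply pow_le || apply pow_lt; lra).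
  pose proof (sqrt_sqrt _ Hv).
  assert (Hhalf : forall a, (a / H = 2 * (a / (H * 2)) + (a / H) mod 2 /\ (a / H) mod 2 < 2)%nat).
  { intros a. rewrite <- Nat.Div0.div_div. split; [apply Nat.div_mod_eq|apply Nat.mod_upper_bound; lia]. }
  rewrite pow2_sub_succ by exact Hl. fold H.
  destruct (Hhalf i) as [Ei Hbi], (Hhalf j) as [Ej Hbj].
  set (Ki := (i / (H * 2))%nat) in *. set (Kj := (j / (H * 2))%nat) in *.
  set (bi := ((i / H) mod 2)%nat) in *. set (bj := ((j / H) mod 2)%nat) in *.
  assert (HKi : (Ki < 2 ^ l)%nat).
  { apply Nat.Div0.div_lt_upper_bound. lia. }
  rewrite (fsum_single _ _ Ki HKi).
  - rewrite !haar_level by lia. fold H. rewrite Ei, Ej. clearbody Ki Kj bi bj.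
    destruct bi as [|[|]]; destruct bj as [|[|]]; try lia;
    destruct (Nat.eqb_spec Ki Kj); subst;
    repeat match goal with |- context [Nat.eqb ?a ?b] => destruct (Nat.eqb_spec a b); try lia end;
    lra.
  - intros k Hk Hne. rewrite (haar_level m l k i) by lia. fold H. rewrite Ei.
    destruct (Nat.eqb_spec (2 * Ki + bi) (2 * k)); [lia|].
    destruct (Nat.eqb_spec (2 * Ki + bi) (2 * k + 1)); [lia|ring].
Qed.

Lemma fsum_levels m F :
  fsum (2 ^ m) F = F O + fsum m (fun l => fsum (2 ^ l) (fun k => F (2 ^ l + k)%nat)).
Proof.
  induction m as [|m IH]; [simpl; ring|].
  replace (2 ^ S m)%nat with (2 ^ m + 2 ^ m)%nat by (rewrite Nat.pow_succ_r'; lia).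
  rewrite fsum_split, IH. cbn [fsum]. ring.
Qed.

(* Summing level by level, the partial sums telescope to 2^L / 2^m times the
   indicator that i and j share a dyadic block of length 2^(m-L). *)
Lemma haar_rows_orthonormal m i j : (i < 2 ^ m)%nat -> (j < 2 ^ m)%nat ->
  fsum (2 ^ m) (fun c => haar m i c * haar m j c) = dirac j i.
Proof.
  intros Hi Hj. rewrite fsum_levels.
  assert (Hp : 0 < 2 ^ m) by (apply pow_lt; lra).
  replace (haar m i O * haar m j O) with (/ 2 ^ m)
    by (unfold haar; rewrite <- Rinv_mult, sqrt_sqrt; lra).
  assert (Hpartial : forall L, (L <= m)%nat ->
     / 2 ^ m + fsum L (fun l => fsum (2 ^ l) (fun k => haar m i (2 ^ l + k)%nat * haar m j (2 ^ l + k)%nat))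
     = if Nat.eqb (i / 2 ^ (m - L)) (j / 2 ^ (m - L)) then 2 ^ L / 2 ^ m else 0).
  { induction L as [|L IH]; intros HL.
    - rewrite Nat.sub_0_r, !Nat.div_small by lia. simpl. field. lra.
    - cbn [fsum]. rewrite <- Rplus_assoc, IH, haar_level_sum by lia.
      replace (m - L - 1)%nat with (m - S L)%nat by lia.
      assert (Hd : forall a, (a / 2 ^ (m - L) = a / 2 ^ (m - S L) / 2)%nat).
      { intros a. rewrite Nat.Div0.div_div. f_equal.
        replace (m - L)%nat with (S (m - S L)) by lia. now rewrite Nat.pow_succ_r', Nat.mul_comm. }
      rewrite !(Hd i), !(Hd j).
      destruct (Nat.eqb_spec (i / 2 ^ (m - S L)) (j / 2 ^ (m - S L))) as [E|E].
      + rewrite E, Nat.eqb_refl. simpl. field. lra.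
      + destruct (Nat.eqb_spec (i / 2 ^ (m - S L) / 2) (j / 2 ^ (m - S L) / 2)); lra. }
  rewrite Hpartial, Nat.sub_diag, Nat.pow_0_r, !Nat.div_1_r by lia. unfold dirac.
  destruct (Nat.eqb_spec i j); [field|]; lra.
Qed.

Lemma countnz_ext n v w : (forall i, (i < n)%nat -> v i = w i) -> countnz n v = countnz n w.
Proof.
  induction n as [|n IH]; cbn [countnz]; intros H; [reflexivity|].
  rewrite IH by (intros; apply H; lia). rewrite H by lia; reflexivity.
Qed.

Lemma countnz_split a b v : countnz (a + b) v = (countnz a v + countnz b (fun i => v (a + i)%nat))%nat.
Proof.
  induction b as [|b IH]; cbn [countnz]; [rewrite Nat.add_0_r; lia|].
  rewrite Nat.add_succ_r; cbn [countnz]. rewrite IH; lia.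
Qed.

Lemma countnz_shift n v :
  countnz (S n) v = ((if Req_EM_T (v O) 0 then 0 else 1) + countnz n (fun i => v (S i)))%nat.
Proof. exact (countnz_split 1 n v). Qed.

Lemma countnz_le1 n v K : (forall i, (i < n)%nat -> v i <> 0 -> i = K) -> (countnz n v <= 1)%nat.
Proof.
  induction n as [|n IH]; cbn [countnz]; intros H; [lia|].
  destruct (Req_EM_T (v n) 0) as [|Hn]; [specialize (IH ltac:(intros; apply H; auto)); lia|].
  assert (n = K) by (apply H; auto). subst K.
  rewrite (countnz_ext _ _ (fun _ => 0)).
  - assert (Hz : forall k, countnz k (fun _ => 0) = O)
      by (induction k; cbn [countnz]; [|destruct (Req_EM_T 0 0)]; lia || congruence).
    rewrite Hz; lia.
  - intros i Hi. destruct (Req_EM_T (v i) 0) as [|Hvi]; [assumption|].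
    specialize (H i ltac:(lia) Hvi). lia.
Qed.

(* Each level contributes at most one nonzero entry to a row of the Haar matrix. *)
Lemma countnz_haar_row m j L : (L <= m)%nat -> (countnz (2 ^ L) (haar m j) <= S L)%nat.
Proof.
  induction L as [|L IH]; intros HL; [simpl; destruct (Req_EM_T _ 0); lia|].
  replace (2 ^ S L)%nat with (2 ^ L + 2 ^ L)%nat by (rewrite Nat.pow_succ_r'; lia).
  rewrite countnz_split. specialize (IH ltac:(lia)).
  assert (countnz (2 ^ L) (fun i => haar m j (2 ^ L + i)%nat) <= 1)%nat; [|lia].
  apply (countnz_le1 _ _ (j / 2 ^ (m - L - 1) / 2)%nat). intros k Hk Hne.
  rewrite haar_level in Hne by lia.
  destruct (Nat.eqb_spec (j / 2 ^ (m - L - 1)) (2 * k)) as [->|].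
  - rewrite Nat.mul_comm, Nat.div_mul; lia.
  - destruct (Nat.eqb_spec (j / 2 ^ (m - L - 1)) (2 * k + 1)) as [->|]; [|lra].
    replace (2 * k + 1)%nat with (1 + k * 2)%nat by lia. rewrite Nat.div_add by lia. reflexivity.
Qed.

(* Row j of the Haar matrix with its scaling coefficient removed: the vector
   [bar D^T e_j], padded with a zero in slot 0. *)
Definition haar_detail (m j c : nat) : R := if Nat.eqb c 0 then 0 else haar m j c.

Lemma mv_haar_detail m j i : (i < 2 ^ m)%nat -> (j < 2 ^ m)%nat ->
  mv (2 ^ m) (haar m) (haar_detail m j) i = dirac j i - / INR (2 ^ m).
Proof.
  intros Hi Hj. pose proof (haar_rows_orthonormal m i j Hi Hj) as H. unfold mv.
  rewrite pow2_pred_succ, fsum_shift in H |- *.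
  assert (Hp : 0 < 2 ^ m) by (apply pow_lt; lra).
  replace (haar m i O * haar m j O) with (/ 2 ^ m) in H
    by (unfold haar; rewrite <- Rinv_mult, sqrt_sqrt; lra).
  rewrite <- pow2_pred_succ, pow_INR. unfold haar_detail. simpl Nat.eqb. cbv beta iota.
  replace (INR 2) with 2 by (simpl; ring). lra.
Qed.

Lemma sqnorm_haar_detail_le1 m j : (j < 2 ^ m)%nat -> sqnorm (2 ^ m) (haar_detail m j) <= 1.
Proof.
  intros Hj. unfold sqnorm.
  rewrite (fsum_ext _ _ (fun c => haar m j c * haar_detail m j c)).
  - change (mv (2 ^ m) (haar m) (haar_detail m j) j <= 1).
    rewrite mv_haar_detail by exact Hj. unfold dirac. rewrite Nat.eqb_refl.
    pose proof (lt_0_INR _ (pow2_pos m)). pose proof (Rinv_0_lt_compat _ H). lra.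
  - intros c _. unfold haar_detail. destruct (Nat.eqb c 0); ring.
Qed.

Lemma countnz_haar_row_tail m j : (countnz (2 ^ m - 1) (fun c => haar m j (S c)) <= m)%nat.
Proof.
  pose proof (countnz_haar_row m j m (le_n m)) as H.
  rewrite pow2_pred_succ, countnz_shift in H.
  destruct (Req_EM_T (haar m j 0) 0) as [E|]; [|lia].
  exfalso. revert E. simpl. apply Rgt_not_eq, Rinv_0_lt_compat, sqrt_lt_R0, pow_lt; lra.
Qed.

Lemma countnz_haar_detail m j : (countnz (2 ^ m) (haar_detail m j) <= m)%nat.
Proof.
  rewrite pow2_pred_succ, countnz_shift. unfold haar_detail at 1. simpl Nat.eqb.
  destruct (Req_EM_T 0 0) as [_|]; [|congruence].
  apply countnz_haar_row_tail.
Qed.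

Lemma dirac_inF m s j : (m <= s)%nat -> (j < 2 ^ m)%nat -> inF m s (dirac j).
Proof.
  intros Hms Hj. split; [|split].
  - intros i _. unfold dirac. destruct (Nat.eqb i j); lra.
  - now apply fsum_dirac.
  - rewrite (countnz_ext _ _ (fun c => haar m j (S c))).
    + pose proof (countnz_haar_row_tail m j). lia.
    + intros c _. exact (fsum_mul_dirac _ (fun i => haar m i (S c)) j Hj).
Qed.

(** * The Poisson model with a Haar-sparse signal *)

Lemma exp_le_compat x y : x <= y -> exp x <= exp y.
Proof. intros [Hlt|Heq]; [left; now apply exp_increasing|right; now rewrite Heq]. Qed.

Lemma exp_ln_div8_le x : 4 <= x -> exp (ln x / 8) <= x / 2.
Proof.
  intros Hx. pose proof ln_lt_2 as Hln2.
  assert (Hlnx : 2 * ln 2 <= ln x).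
  { replace (2 * ln 2) with (ln (2 * 2)) by (rewrite ln_mult; lra).
    destruct (Req_dec x 4) as [->|]; [right; f_equal; lra|left; apply ln_increasing; lra]. }
  replace (x / 2) with (exp (ln x + ln (/ 2))).
  - apply exp_le_compat. rewrite ln_Rinv by lra. lra.
  - rewrite <- ln_mult, exp_ln by lra; reflexivity.
Qed.

Section HaarPoissonModel.

Variables (m n s : nat) (T al au delta : R) (At A : nat -> nat -> R).
Hypotheses
  (n_pos : (1 <= n)%nat)
  (p_ge4 : (4 <= 2 ^ m)%nat)
  (m_le_s : (m <= s)%nat)
  (T_pos : 0 < T)
  (al_lt_au : al < au)
  (At_range : forall i j, (i < n)%nat -> (j < 2 ^ m)%nat ->
     al / sqrt (INR n) <= At i j <= au / sqrt (INR n))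
  (A_def : forall i j, (i < n)%nat -> (j < 2 ^ m)%nat ->
     A i j = (At i j + (au - 2 * al) / sqrt (INR n)) / (2 * (au - al) * sqrt (INR n)))
  (delta_range : 0 <= delta < 1)
  (At_rip : forall u : nat -> R, (countnz (2 ^ m) u <= 2 * s)%nat ->
     sqnorm n (mv (2 ^ m) At (mv (2 ^ m) (haar m) u)) <= (1 + delta) * sqnorm (2 ^ m) u)
  (T_small : T <= (au - al) ^ 2 * ln (INR (2 ^ m)) / (4 * (1 + delta))).

Local Notation p := (2 ^ m)%nat.
Local Notation rate f := (fun k => T * mv p A f k).
Local Notation uniform := (fun _ : nat => / INR p).

Lemma INR_p_ge4 : 4 <= INR p.
Proof. replace 4 with (INR 4) by (simpl; ring). now apply le_INR. Qed.

Lemma sqrt_n_pos : 0 < sqrt (INR n).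
Proof. apply sqrt_lt_R0, lt_0_INR; lia. Qed.

Lemma A_entry_lower k i : (k < n)%nat -> (i < p)%nat -> / (2 * INR n) <= A k i.
Proof.
  intros Hk Hi. rewrite A_def by assumption. destruct (At_range k i Hk Hi) as [Hlow _].
  pose proof sqrt_n_pos as Hr. set (r := sqrt (INR n)) in *.
  replace (INR n) with (r * r) by (apply sqrt_sqrt, pos_INR).
  replace (/ (2 * (r * r))) with ((al / r + (au - 2 * al) / r) / (2 * (au - al) * r)) by (field; lra).
  apply Rmult_le_compat_r; [left; apply Rinv_0_lt_compat; nra|lra].
Qed.

Lemma uniform_rate_lower k : (k < n)%nat -> T / (2 * INR n) <= rate uniform k.
Proof.
  intros Hk. pose proof INR_p_ge4.
  replace (T / (2 * INR n)) with (T * fsum p (fun _ => / (2 * INR n) * / INR p))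
    by (rewrite fsum_const; field; split; [apply not_0_INR; lia|lra]).
  apply Rmult_le_compat_l; [lra|]. apply fsum_le; intros i Hi.
  apply Rmult_le_compat_r; [left; apply Rinv_0_lt_compat; lra|now apply A_entry_lower].
Qed.

Lemma uniform_rate_pos k : (k < n)%nat -> 0 < rate uniform k.
Proof.
  intros Hk. eapply Rlt_le_trans; [|now apply uniform_rate_lower].
  apply Rdiv_lt_0_compat; [lra|]. pose proof (lt_0_INR n ltac:(lia)). lra.
Qed.

Lemma dirac_rate_nonneg j k : (j < p)%nat -> (k < n)%nat -> 0 <= rate (dirac j) k.
Proof.
  intros Hj Hk. cbv beta. rewrite mv_dirac by exact Hj. apply Rmult_le_pos; [lra|].
  eapply Rle_trans; [|now apply A_entry_lower].
  left; apply Rinv_0_lt_compat. pose proof (lt_0_INR n ltac:(lia)). lra.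
Qed.

(* The affine offset of Assumption 1 cancels because e_j and the uniform vector
   have the same total mass. *)
Lemma rate_gap j k : (j < p)%nat -> (k < n)%nat ->
  rate (dirac j) k - rate uniform k
  = T / (2 * (au - al) * sqrt (INR n)) * mv p At (mv p (haar m) (haar_detail m j)) k.
Proof.
  intros Hj Hk. cbv beta. pose proof INR_p_ge4.
  rewrite !(mv_affine p A At ((au - 2 * al) / sqrt (INR n)) (2 * (au - al) * sqrt (INR n)))
    by (intros; now apply A_def).
  rewrite fsum_dirac, fsum_const by exact Hj.
  replace (mv p At (mv p (haar m) (haar_detail m j)) k)
    with (mv p At (dirac j) k - mv p At uniform k).
  - pose proof sqrt_n_pos. field. repeat split; lra.
  - rewrite mv_sub. apply fsum_ext; intros i Hi. now rewrite mv_haar_detail.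
Qed.

Lemma chi2_exponent_le j : (j < p)%nat ->
  fsum n (fun k => (rate (dirac j) k - rate uniform k) ^ 2 / rate uniform k) <= ln (INR p) / 8.
Proof.
  intros Hj. pose proof sqrt_n_pos as Hr. pose proof (lt_0_INR n ltac:(lia)) as Hn.
  set (z := mv p At (mv p (haar m) (haar_detail m j))).
  assert (Hz : sqnorm n z <= 1 + delta).
  { pose proof (sqnorm_haar_detail_le1 m j Hj). pose proof (countnz_haar_detail m j).
    eapply Rle_trans; [apply At_rip; lia|]. nra. }
  assert (Hgap : (au - al) ^ 2 > 0) by nra.
  apply Rle_trans with (fsum n (fun k => T / (2 * (au - al) ^ 2) * z k ^ 2)).
  - apply fsum_le; intros k Hk. rewrite rate_gap by assumption. fold z.
    pose proof (uniform_rate_lower k Hk) as Hmu.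
    assert (Hlow : 0 < T / (2 * INR n)) by (apply Rdiv_lt_0_compat; lra).
    apply Rle_trans with ((T / (2 * (au - al) * sqrt (INR n)) * z k) ^ 2 / (T / (2 * INR n))).
    + unfold Rdiv at 2 3. apply Rmult_le_compat_l; [apply pow2_ge_0|].
      apply Rinv_le_contravar; assumption.
    + right. replace (2 * INR n) with (2 * (sqrt (INR n) * sqrt (INR n))) by (rewrite sqrt_sqrt; lra).
      field. repeat split; lra.
  - rewrite fsum_scal. fold (sqnorm n z).
    assert (Hc : 0 <= T / (2 * (au - al) ^ 2)) by (apply Rmult_le_pos; [lra|left; apply Rinv_0_lt_compat; lra]).
    apply Rle_trans with (T / (2 * (au - al) ^ 2) * (1 + delta)); [now apply Rmult_le_compat_l|].
    apply Rle_trans with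
      ((au - al) ^ 2 * ln (INR p) / (4 * (1 + delta)) / (2 * (au - al) ^ 2) * (1 + delta)).
    + apply Rmult_le_compat_r; [lra|]. unfold Rdiv at 1 3.
      apply Rmult_le_compat_r; [left; apply Rinv_0_lt_compat; lra|exact T_small].
    + right. field. lra.
Qed.

Lemma chi2_dirac_le j N : (j < p)%nat ->
  boxsum n N (fun y => lik (rate (dirac j)) y ^ 2 / lik (rate uniform) y) <= INR p / 2.
Proof.
  intros Hj. eapply Rle_trans; [apply lik_chi2_le|].
  - intros k Hk. split; [now apply dirac_rate_nonneg|now apply uniform_rate_pos].
  - eapply Rle_trans; [apply exp_le_compat, chi2_exponent_le, Hj|].
    apply exp_ln_div8_le, INR_p_ge4.
Qed.

Lemma dirac_risks_sum_ge fhat eps : 0 < eps <= 1 / 2 ->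
  exists N, INR p * (1 / 8 - eps / 2)
    <= fsum p (fun j => boxsum n N (fun y =>
         lik (rate (dirac j)) y * sqnorm p (fun i => fhat y i - dirac j i))).
Proof.
  intros Heps. pose proof (lt_0_INR n ltac:(lia)) as Hn.
  set (eta := eps / INR n).
  assert (Heta : 0 < eta <= 1).
  { assert (eta * INR n = eps) by (unfold eta; field; lra).
    assert (1 <= INR n) by (apply (le_INR 1); lia). split; nra. }
  destruct (eventually_forall_lt p (fun j N => forall k, (k < n)%nat ->
              1 - eta <= fsum (S N) (pois (rate (dirac j) k)))) as [N HN].
  { intros j Hj. apply eventually_forall_lt. intros k Hk. now apply pois_mass_eventually. }
  exists N. specialize (HN N (le_n N)).
  assert (Hmass : INR p * (1 - eps) <= fsum p (fun j => boxsum n N (lik (rate (dirac j))))).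
  { rewrite <- fsum_const. apply fsum_le; intros j Hj.
    replace eps with (INR n * eta) by (unfold eta; field; lra).
    apply lik_mass_ge_1_sub; [lra|]. intros k Hk.
    split; [now apply dirac_rate_nonneg|now apply HN]. }
  pose proof (multiple_testing_risk_ge n N p (fun j => lik (rate (dirac j))) (lik (rate uniform))
    (fun j y => sqnorm p (fun i => fhat y i - dirac j i))) as Htest.
  eapply Rle_trans; [|apply Htest]; [lra| |..].
  - apply pow2_pos.
  - intros y Hy. apply lik_pos. intros k Hk. apply uniform_rate_pos. lia.
  - apply lik_mass_le1. intros k Hk. left; now apply uniform_rate_pos.
  - intros j y Hj Hy. apply lik_nonneg. intros k Hk. apply dirac_rate_nonneg; lia.
  - intros j Hj. exact (chi2_dirac_le j N Hj).
  - intros; apply sqnorm_nonneg.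
  - intros a b y. apply sqnorm_sub_dirac_sep.
Qed.

End HaarPoissonModel.

Theorem lemma2 (m n s : nat) (T al au delta : R) (At A : nat -> nat -> R) :
  (1 <= n)%nat ->
  (4 <= 2 ^ m)%nat ->
  (m <= s)%nat ->
  0 < T ->
  al < au ->
  (forall i j, (i < n)%nat -> (j < 2 ^ m)%nat ->
     al / sqrt (INR n) <= At i j <= au / sqrt (INR n)) ->
  (forall i j, (i < n)%nat -> (j < 2 ^ m)%nat ->
     A i j = (At i j + (au - 2 * al) / sqrt (INR n))
             / (2 * (au - al) * sqrt (INR n))) ->
  0 <= delta < 1 ->
  (forall u : nat -> R, (countnz (2 ^ m) u <= 2 * s)%nat ->
     sqnorm n (mv (2 ^ m) At (mv (2 ^ m) (haar m) u))
       <= (1 + delta) * sqnorm (2 ^ m) u) ->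
  T <= (au - al) ^ 2 * ln (INR (2 ^ m)) / (4 * (1 + delta)) ->
  forall fhat : list nat -> nat -> R,
  forall c, c < 1 / 8 ->
  exists f, inF m s f /\
    exists N : nat,
      c < boxsum n N (fun y =>
            lik (fun i => T * mv (2 ^ m) A f i) y
            * sqnorm (2 ^ m) (fun j => fhat y j - f j)).
Proof.
  intros Hn Hp4 Hms HT Hal HAt HA Hdelta Hrip HTsmall fhat c Hc.
  set (eps := Rmin (1 / 2) (1 / 8 - c)).
  assert (Heps : 0 < eps <= 1 / 2 /\ eps <= 1 / 8 - c)
    by (unfold eps; repeat split; [apply Rmin_pos|apply Rmin_l|apply Rmin_r]; lra).
  destruct (dirac_risks_sum_ge m n s T al au delta At A Hn Hp4 Hms HT Hal HAt HA Hdelta Hrip HTsmall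
              fhat eps (proj1 Heps)) as [N Hsum].
  assert (Hgap : c * INR (2 ^ m) < INR (2 ^ m) * (1 / 8 - eps / 2)).
  { rewrite Rmult_comm. apply Rmult_lt_compat_l; [apply lt_0_INR, pow2_pos|lra]. }
  destruct (fsum_exists_gt _ _ c (Rlt_le_trans _ _ _ Hgap Hsum)) as [j [Hj Hrisk]].
  exists (dirac j). split; [now apply dirac_inF|]. exists N. exact Hrisk.
Qed.
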